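(* Let $h\ge1$ and $c$ be integers with $c>2(h+1)$. Let $G$ be the $h\times2^h$ binary reflected Gray code matrix: for $0\le m<2^h$, column $m$ of $G$ is the binary representation of $m\oplus\lfloor m/2\rfloor$ (bitwise XOR), with row $0$ the most significant bit and row $h-1$ the least significant bit. For $i\in\{0,\dots,c-1\}$ let $G^+(i)$ be the $c\times2^h$ binary matrix (rows indexed $0,\dots,c-1$) whose row $i$ is all ones, whose row $(i+k)\bmod c$ equals row $k-1$ of $G$ for $k=1,\dots,h$, and whose remaining rows are zero. Let $\mathbf{B}=[\,\mathbf{0}\;G^+(c-1)\;G^+(c-2)\;\cdots\;G^+(0)\,]$, a $c\times\ell$ matrix with $\ell=c2^h+1$, where $\mathbf{0}$ is the zero column. Then $\mathbf{B}$ satisfies: (1) the $2\ell$ vectors consisting of the columns of $\mathbf{B}$ and their binary complements are pairwise distinct; (2) the first column of $\mathbf{B}$ is zero; (3) every row of $\sigma(\mathbf{B})-\mathbf{B}$ has exactly $2^{h-1}+1$ entries equal to $-1$, where $\sigma(\mathbf{B})(\cdot,i)=\mathbf{B}(\cdot,(i+1)\bmod\ell)$.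
   Context: Columns of $\mathbf{B}$ are indexed $0,\dots,\ell-1$. The number of $-1$ entries in a row of $\sigma(\mathbf{B})-\mathbf{B}$ is the number of positions $t$ with $\mathbf{B}(r,t)=1$ and $\mathbf{B}(r,(t+1)\bmod\ell)=0$. *)

From Stdlib Require Import NArith.
From mathcomp Require Import all_boot all_algebra.
Set Implicit Arguments. Unset Strict Implicit. Unset Printing Implicit Defensive.

Definition nxor (a b : nat) : nat := N.to_nat (N.lxor (N.of_nat a) (N.of_nat b)).

Definition bitn (n k : nat) : bool := odd (n %/ 2 ^ k).

Definition gray (h k m : nat) : bool := bitn (nxor m (m %/ 2)) (h.-1 - k).

Definition gplus (h c i r m : nat) : bool :=
  if r == i then true
  else let k := (r + c - i) %% c in
       if (1 <= k <= h) then gray h k.-1 m else false.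

Definition ell (h c : nat) : nat := c * 2 ^ h + 1.

Definition Bmat (h c r j : nat) : bool :=
  if j == 0 then false
  else let p := (j.-1) %/ 2 ^ h in
       let m := (j.-1) %% 2 ^ h in
       gplus h c (c.-1 - p) r m.

Definition colv (h c j : nat) (b : bool) : {ffun 'I_c -> bool} :=
  [ffun r : 'I_c => Bmat h c r j (+) b].

(* Everything rests on one description (Bmat_block): every nonzero column of B
   is a rotation of a template column T(m) = [1; G(.,m); 0; ...; 0].
   - Columns.  T(m) has at most h+1 ones, so two complementary columns would
     force c <= 2(h+1); two equal columns have equal rotations, because the top
     1 of each must meet one of the first h+1 template rows of the other and
     2h < c, and then equal Gray codes.
   - Rows.  The -1 entries of a row of sigma(B) - B are its cyclic descents.
     Row r meets each block in a different template row, and a block ending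
     with a 1 is always followed by a 0, so the descents of row r add up block
     by block to the descents of all c template rows: 1 for the all-ones row,
     2^(k-2) (resp. 1 for k = 1) for Gray code row k - 1, which is a stretched
     copy of the period-4 pattern 0110, and none for the zero rows. *)

From Stdlib Require Import NArith.
From mathcomp Require Import all_boot all_algebra.
From mathcomp Require Import zify.
Import GRing.Theory.

Set Implicit Arguments. Unset Strict Implicit. Unset Printing Implicit Defensive.

Lemma div2_half n : Nat.div2 n = n./2 /\ Nat.div2 n.+1 = uphalf n.
Proof. by elim: n => [|n [IH1 IH2]] //=; rewrite IH1. Qed.

Lemma N_odd_even n : N.odd (N.of_nat n) = odd n /\ N.even (N.of_nat n) = ~~ odd n.
Proof.
elim: n => [|n [IH1 IH2]] //; rewrite Nat2N.inj_succ.
by rewrite N.odd_succ N.even_succ IH1 IH2 negbK.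
Qed.

Lemma testbit_bitn n k : N.testbit (N.of_nat n) (N.of_nat k) = bitn n k.
Proof.
elim: k n => [|k IH] n.
  by rewrite /bitn expn0 divn1 /= N.bit0_odd (proj1 (N_odd_even n)).
rewrite Nat2N.inj_succ N.testbit_succ_r_div2; last exact: N.le_0_l.
by rewrite -Nat2N.inj_div2 IH (proj1 (div2_half n)) /bitn expnS divnMA divn2.
Qed.

Lemma bitn_nxor a b k : bitn (nxor a b) k = bitn a k (+) bitn b k.
Proof.
rewrite -!testbit_bitn /nxor N2Nat.id N.lxor_spec.
by case: (N.testbit _ _); case: (N.testbit _ _).
Qed.

Lemma bitn_half m k : bitn (m %/ 2) k = bitn m k.+1.
Proof. by rewrite /bitn expnS -divnMA. Qed.

Lemma gray_bits h k m : gray h k m = bitn m (h.-1 - k) (+) bitn m (h.-1 - k).+1.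
Proof. by rewrite /gray bitn_nxor bitn_half. Qed.

Lemma bits_inj h m1 m2 : m1 < 2 ^ h -> m2 < 2 ^ h ->
  (forall k, k < h -> bitn m1 k = bitn m2 k) -> m1 = m2.
Proof.
elim: h m1 m2 => [|h IH] m1 m2.
  by rewrite expn0 !ltnS !leqn0 => /eqP -> /eqP ->.
move=> h1 h2 eq_bits.
have eq_odd : odd m1 = odd m2.
  by have := eq_bits 0 (ltn0Sn _); rewrite /bitn expn0 !divn1.
rewrite (divn_eq m1 2) (divn_eq m2 2) !modn2 eq_odd (IH (m1 %/ 2) (m2 %/ 2)) //.
- by rewrite ltn_divLR // -expnSr.
- by rewrite ltn_divLR // -expnSr.
- by move=> k hk; rewrite !bitn_half; apply: eq_bits.
Qed.

(* The columns of the Gray code matrix are pairwise distinct: the digits of m are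
   recovered from the top down, the digit in position h being 0. *)
Lemma gray_inj h m1 m2 : m1 < 2 ^ h -> m2 < 2 ^ h ->
  (forall k, k < h -> gray h k m1 = gray h k m2) -> m1 = m2.
Proof.
move=> h1 h2 eq_gray.
have eq_xor k : k < h -> bitn m1 k (+) bitn m1 k.+1 = bitn m2 k (+) bitn m2 k.+1.
  move=> hk; have := eq_gray (h.-1 - k) ltac:(lia); rewrite !gray_bits.
  by have -> : h.-1 - (h.-1 - k) = k by lia.
have top m : m < 2 ^ h -> bitn m h = false by move=> hm; rewrite /bitn divn_small.
have eq_high i : i <= h -> bitn m1 (h - i) = bitn m2 (h - i).
  elim: i => [|i IH] hi; first by rewrite subn0 !top.
  have := eq_xor (h - i.+1) ltac:(lia).
  rewrite (_ : (h - i.+1).+1 = h - i); last lia.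
  rewrite IH; last lia.
  by move/(congr1 (addb^~ (bitn m2 (h - i)))); rewrite !addbK.
apply: bits_inj h1 h2 _ => k hk.
by have := eq_high (h - k) ltac:(lia); rewrite (_ : h - (h - k) = k); last lia.
Qed.

(* Entry k of the template column T(m) = [1; G(0,m); ...; G(h-1,m); 0; ...; 0].
   Every block G^+(i) of B consists of the columns T(m), rotated down by i rows. *)
Definition tmpl (h k m : nat) : bool :=
  if k == 0 then true else if k <= h then gray h k.-1 m else false.

Lemma tmpl_out h k m : h < k -> tmpl h k m = false.
Proof. by move=> hk; rewrite /tmpl ifF ?ifF //; lia. Qed.

Lemma tmpl_le h k m : tmpl h k m -> k <= h.
Proof. by case: (leqP k h) => // hk; rewrite tmpl_out. Qed.

Lemma tmpl_first h k : 0 < k -> tmpl h k 0 = false.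
Proof.
move=> hk; rewrite /tmpl ifF; last lia.
by case: ifP; rewrite // gray_bits /bitn !div0n.
Qed.

Lemma Bmat_block h c r p m : r < c -> p < c -> m < 2 ^ h ->
  Bmat h c r (p * 2 ^ h + m).+1 = tmpl h ((r + 1 + p) %% c) m.
Proof.
move=> hr hp hm; rewrite /Bmat /= divnMDl ?expn_gt0 // divn_small // addn0.
rewrite modnMDl modn_small // /gplus /tmpl.
rewrite (_ : r + c - (c.-1 - p) = r + 1 + p); last lia.
have -> : (r == c.-1 - p) = ((r + 1 + p) %% c == 0).
  have [lt_c | ge_c] := ltnP (r + 1 + p) c.
    by rewrite modn_small //; apply/eqP/eqP; lia.
  by rewrite -(subnK ge_c) modnDr modn_small; [apply/eqP/eqP|]; lia.
by case: eqP => // /eqP k0; rewrite lt0n k0.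
Qed.

Lemma row_offset_surj c q t : q < c -> t < c ->
  exists2 r, r < c & (r + 1 + q) %% c = t.
Proof.
move=> hq ht; exists ((t + c - 1 - q) %% c); first by rewrite ltn_pmod //; lia.
rewrite -addnA modnDml (_ : t + c - 1 - q + (1 + q) = t + c); last lia.
by rewrite modnDr modn_small.
Qed.

Lemma row_offset_shift c r q1 q2 : q1 <= c ->
  (r + 1 + q2) %% c = ((r + 1 + q1) %% c + (q2 + c - q1)) %% c.
Proof.
move=> hq; rewrite modnDml (_ : r + 1 + q1 + (q2 + c - q1) = r + 1 + q2 + c) ?modnDr //.
lia.
Qed.

Lemma cyclic_gap_eq c h q1 q2 : q1 < c -> q2 < c -> 2 * h < c ->
  (q2 + c - q1) %% c <= h -> (q1 + c - q2) %% c <= h -> q1 = q2.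
Proof.
move=> h1 h2 hc; wlog le12 : q1 q2 h1 h2 / q1 <= q2.
  by move=> wlog_le; case: (leqP q1 q2) => [|/ltnW] le d1 d2;
    [apply: wlog_le | symmetry; apply: wlog_le].
rewrite (_ : q2 + c - q1 = (q2 - q1) + c); last lia.
rewrite modnDr modn_small; last lia.
have [-> | ne12] := eqVneq q1 q2 => // d1.
rewrite modn_small; lia.
Qed.

Lemma sum_rot c a (F : nat -> nat) :
  \sum_(p < c) F ((a + p) %% c) = \sum_(p < c) F p.
Proof.
case: c => [|c]; first by rewrite !big_ord0.
pose f (p : 'I_c.+1) := Ordinal (ltn_pmod (a + p) (ltn0Sn c)).
have f_inj : injective f.
  move=> p q /(congr1 val) /= /eqP; rewrite eqn_modDl !modn_small //.
  by move/eqP/val_inj.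
by rewrite [RHS](reindex_inj f_inj).
Qed.

Lemma sum_tmpl_le h c m : \sum_(k < c) tmpl h k m <= h + 1.
Proof.
suff : \sum_(k < c) tmpl h k m <= minn c (h + 1) by lia.
elim: c => [|c IH]; first by rewrite big_ord0.
rewrite big_ord_recr /=; have [ch | hc] := leqP c h.
  by apply: leq_trans (leq_add IH (leq_b1 (tmpl h c m))) _; lia.
by rewrite tmpl_out // addn0; apply: leq_trans IH _; lia.
Qed.

Lemma col_index_split h c s : s < c * 2 ^ h ->
  exists q m, [/\ q < c, m < 2 ^ h & s = q * 2 ^ h + m].
Proof.
move=> hs; exists (s %/ 2 ^ h), (s %% 2 ^ h); split.
- by rewrite ltn_divLR ?expn_gt0 // mulnC.
- by rewrite ltn_pmod ?expn_gt0.
- exact: divn_eq.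
Qed.

Lemma col_weight h c j : j < ell h c -> \sum_(r < c) Bmat h c r j <= h + 1.
Proof.
case: j => [_|s]; first by rewrite big1.
rewrite /ell addn1 ltnS => /col_index_split [q [m [hq hm ->]]].
rewrite (eq_bigr (fun r : 'I_c => nat_of_bool (tmpl h (((1 + q) + r) %% c) m))).
  by rewrite (sum_rot _ _ (fun k => nat_of_bool (tmpl h k m))) sum_tmpl_le.
by move=> r _; rewrite Bmat_block // [1 + q + r]addnC addnA.
Qed.

(* Rotated template columns are pairwise distinct when 2h < c: the top 1 of each one
   lies within the first h+1 template rows of the other, which pins the rotation,
   and then the Gray code rows pin m. *)
Lemma rotated_tmpl_inj h c q1 q2 m1 m2 : 2 * h < c -> q1 < c -> q2 < c ->
  m1 < 2 ^ h -> m2 < 2 ^ h ->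
  (forall r, r < c -> tmpl h ((r + 1 + q1) %% c) m1 = tmpl h ((r + 1 + q2) %% c) m2) ->
  q1 = q2 /\ m1 = m2.
Proof.
move=> hc hq1 hq2 hm1 hm2 eq_col.
have c0 : 0 < c by lia.
have gap qa qb ma mb : qa < c ->
    (forall r, r < c -> tmpl h ((r + 1 + qa) %% c) ma = tmpl h ((r + 1 + qb) %% c) mb) ->
    (qb + c - qa) %% c <= h.
  move=> hqa eq_ab; have [r hr top] := row_offset_surj hqa c0.
  have := eq_ab r hr; rewrite (row_offset_shift r qb (ltnW hqa)) top add0n.
  by move/esym/tmpl_le.
have eq_q : q1 = q2.
  apply: (cyclic_gap_eq hq1 hq2 hc); first exact: gap eq_col.
  by apply: (gap _ _ m2 m1) => // r hr; rewrite eq_col.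
subst q2; split => //; apply: (gray_inj hm1 hm2) => k hk.
have [r hr row_k] : exists2 r, r < c & (r + 1 + q1) %% c = k.+1.
  by apply: row_offset_surj; lia.
by have := eq_col r hr; rewrite row_k /tmpl /= hk.
Qed.

Lemma col_nonzero h c s : s < c * 2 ^ h -> exists2 r, r < c & Bmat h c r s.+1.
Proof.
move=> /col_index_split [q [m [hq hm ->]]].
have [r hr top] : exists2 r, r < c & (r + 1 + q) %% c = 0.
  by apply: row_offset_surj; lia.
by exists r; rewrite // Bmat_block // top.
Qed.

Lemma cols_eq h c j1 j2 : 2 * h < c -> j1 < ell h c -> j2 < ell h c ->
  (forall r, r < c -> Bmat h c r j1 = Bmat h c r j2) -> j1 = j2.
Proof.
rewrite /ell addn1 => hc.
case: j1 => [|s1]; case: j2 => [|s2] // hj1 hj2 eq_col.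
- by have [r hr] := col_nonzero hj2; rewrite -eq_col.
- by have [r hr] := col_nonzero hj1; rewrite eq_col.
move: hj1 hj2 eq_col; rewrite !ltnS.
move=> /col_index_split [q1 [m1 [hq1 hm1 ->]]] /col_index_split [q2 [m2 [hq2 hm2 ->]]].
move=> eq_col; suff [-> ->] : q1 = q2 /\ m1 = m2 by [].
apply: (rotated_tmpl_inj hc hq1 hq2 hm1 hm2) => r hr.
by rewrite -!Bmat_block // eq_col.
Qed.

(* Part (1) with complements: two complementary columns would have total weight c,
   but each has weight at most h+1 < c/2. *)
Lemma cols_not_compl h c j1 j2 : 2 * (h + 1) < c -> j1 < ell h c -> j2 < ell h c ->
  ~ (forall r, r < c -> Bmat h c r j1 = ~~ Bmat h c r j2).
Proof.
move=> hc hj1 hj2 compl.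
have : \sum_(r < c) Bmat h c r j1 + \sum_(r < c) Bmat h c r j2 = c.
  rewrite -big_split /= -[RHS]card_ord -sum1_card.
  by apply: eq_bigr => r _; rewrite compl //; case: (Bmat _ _ _ _).
by have := col_weight hj1; have := col_weight hj2; lia.
Qed.

Definition descents (x : nat -> bool) (n : nat) : nat :=
  count (fun m => x m && ~~ x m.+1) (iota 0 n).

Lemma count_iota_blocks (P : pred nat) n N :
  count P (iota 0 (n * N)) = \sum_(p < n) count P (iota (p * N) N).
Proof.
elim: n => [|n IH]; first by rewrite mul0n big_ord0.
by rewrite mulSnr iotaD count_cat IH big_ord_recr add0n.
Qed.

Lemma descents_sum (z : nat -> bool) n :
  descents z n = \sum_(p < n) (z p && ~~ z p.+1).
Proof.
rewrite /descents -[n in iota 0 n]muln1 count_iota_blocks.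
by apply: eq_bigr => p _; rewrite muln1 /= addn0.
Qed.

Lemma count_periodic (P : pred nat) d n : (forall u, P (u + d) = P u) ->
  count P (iota 0 (n * d)) = n * count P (iota 0 d).
Proof.
move=> P_per; have P_shift p u : P (p * d + u) = P u.
  by elim: p => [|p IH]; rewrite ?mul0n ?add0n // mulSnr -addnA [d + u]addnC addnA P_per.
rewrite count_iota_blocks (eq_bigr (fun _ => count P (iota 0 d))).
  by rewrite sum_nat_const card_ord.
by move=> p _; rewrite -[p * d]addn0 iotaDl count_map; apply: eq_count => u /=; rewrite P_shift.
Qed.

Lemma descents_stretch (x z : nat -> bool) d n : 0 < d ->
  (forall m, m <= n * d -> x m = z (m %/ d)) -> descents x (n * d) = descents z n.
Proof.
case: d => [//|d] _ x_def; rewrite [RHS]descents_sum /descents count_iota_blocks.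
apply: eq_bigr => p _; have hp := ltn_ord p.
have x_block i : i <= d -> x (p * d.+1 + i) = z p.
  move=> hi; rewrite x_def; last nia.
  by rewrite divnMDl // divn_small ?addn0.
rewrite (_ : iota _ d.+1 = iota (p * d.+1) d ++ [:: p * d.+1 + d]); last first.
  by rewrite -addn1 iotaD.
rewrite count_cat (@eq_in_count _ _ pred0) ?count_pred0 /=; last first.
  move=> m; rewrite mem_iota => /andP [lo hi].
  rewrite -(subnKC lo) -addnS !x_block; [by case: (z p) | lia | lia].
rewrite addn0 add0n -addnS x_block // (_ : p * d.+1 + d.+1 = p.+1 * d.+1); last lia.
by rewrite x_def ?mulnK //; nia.
Qed.

Lemma descents_blocks (Y : nat -> bool) (X : nat -> nat -> bool) n N :
  (forall p m, p < n -> m < N -> Y (p * N + m) = X p m) ->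
  (forall p, p < n -> X p N.-1 -> ~~ Y (p.+1 * N)) ->
  descents Y (n * N) = \sum_(p < n) descents (fun m => (m < N) && X p m) N.
Proof.
move=> Y_block boundary; rewrite /descents count_iota_blocks.
apply: eq_bigr => p _; have hp := ltn_ord p.
rewrite -[p * N]addn0 iotaDl count_map; apply: eq_in_count => m.
rewrite mem_iota add0n => /= hm; rewrite hm Y_block //.
have [lt_mN | ge_mN] := ltnP m.+1 N; first by rewrite -addnS Y_block.
have -> : m = N.-1 by lia.
rewrite andbT (_ : (p * N + N.-1).+1 = p.+1 * N); last by rewrite mulSnr; lia.
by case last_one: (X p N.-1) => //; rewrite boundary.
Qed.

Lemma cyclic_descents (x : nat -> bool) n : x 0 = false ->
  count (fun t => x t && ~~ x ((t + 1) %% n.+1)) (iota 0 n.+1)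
  = descents (fun s => (s < n) && x s.+1) n.
Proof.
move=> x0; rewrite /= x0 add0n (_ : iota 1 n = map S (iota 0 n)) ?count_map; last first.
  by rewrite -(iotaDl 1 0).
apply: eq_in_count => s; rewrite mem_iota add0n => /= hs.
rewrite hs addn1; have [lt_sn | ge_sn] := ltnP s.+1 n.
  by rewrite modn_small.
by rewrite (_ : s.+2 = n.+1) ?modnn ?x0 //; lia.
Qed.

Definition trow (h k m : nat) : bool := (m < 2 ^ h) && tmpl h k m.

(* The period-4 pattern 0,1,1,0 of the xor of the two lowest binary digits; row k >= 1
   of the Gray code matrix is this pattern stretched by 2^(h-k). *)
Definition gray_wave (u : nat) : bool := odd u (+) odd (u %/ 2).

Lemma gray_wave_periodic u : gray_wave (u + 4) = gray_wave u.
Proof.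
by rewrite /gray_wave (_ : u + 4 = 2 * 2 + u) ?divnMDl // ?oddD //=; lia.
Qed.

(* One descent per period, and one for k = 1 (note 2^(1-2) = 1 in nat). *)
Lemma descents_gray_wave k : 0 < k ->
  descents (fun u => (u < 2 ^ k) && gray_wave u) (2 ^ k) = 2 ^ (k - 2).
Proof.
case: k => [//|[_|k _]]; first by [].
have e : 2 ^ k.+2 = 2 ^ k * 4 by rewrite !expnS; lia.
have wave_top : gray_wave (2 ^ k.+2) = false.
  by rewrite /gray_wave e (_ : 2 ^ k * 4 = 2 ^ k * 2 * 2) ?mulnK ?oddM ?andbF //; lia.
rewrite (_ : k.+2 - 2 = k); last lia.
rewrite /descents (@eq_in_count _ _ (fun u => gray_wave u && ~~ gray_wave u.+1)).
  rewrite e count_periodic; first by rewrite muln1.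
  by move=> u /=; rewrite -addSn !gray_wave_periodic.
move=> u; rewrite mem_iota add0n => /= hu; rewrite hu.
have [//|ge] := ltnP u.+1 (2 ^ k.+2).
by rewrite (_ : u.+1 = 2 ^ k.+2) ?wave_top ?andbF; lia.
Qed.

Lemma trow_gray h k m : 0 < k <= h ->
  trow h k m = (m %/ 2 ^ (h - k) < 2 ^ k) && gray_wave (m %/ 2 ^ (h - k)).
Proof.
move=> /andP [k0 kh]; rewrite /trow /tmpl ifF ?kh; last lia.
rewrite gray_bits (_ : h.-1 - k.-1 = h - k); last lia.
rewrite ltn_divLR ?expn_gt0 // -expnD subnKC //.
by rewrite /bitn /gray_wave expnSr divnMA.
Qed.

Lemma descents_trow h k : k <= h ->
  descents (trow h k) (2 ^ h) = if k == 0 then 1 else 2 ^ (k - 2).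
Proof.
move=> kh; have split_h : 2 ^ h = 2 ^ k * 2 ^ (h - k) by rewrite -expnD subnKC.
case: eqP => [-> | /eqP k0].
  rewrite -[2 ^ h]mul1n (@descents_stretch _ (fun u => u == 0)) ?expn_gt0 // => m _.
  by rewrite /trow andbT eqn0Ngt divn_gt0 ?expn_gt0 // -ltnNge.
rewrite split_h (descents_stretch (z := fun u => (u < 2 ^ k) && gray_wave u)) ?expn_gt0 //.
  by rewrite descents_gray_wave // lt0n.
by move=> m _; rewrite trow_gray // lt0n k0.
Qed.

Lemma descents_trow_out h k : h < k -> descents (trow h k) (2 ^ h) = 0.
Proof.
move=> hk; rewrite /descents (@eq_count _ _ pred0) ?count_pred0 // => m.
by rewrite /trow tmpl_out ?andbF.
Qed.

(* Summed over all template rows: 1 + 1 + (2 + 4 + ... + 2^(h-2)) = 2^(h-1) + 1. *)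
Lemma sum_descents_trow h c : 0 < h -> h < c ->
  \sum_(k < c) descents (trow h k) (2 ^ h) = 2 ^ (h - 1) + 1.
Proof.
move=> h0 hc.
have prefix n : 0 < n <= h -> \sum_(k < n.+1) descents (trow h k) (2 ^ h) = 2 ^ (n - 1) + 1.
  elim: n => [//|n IH] /andP [_ hn]; rewrite big_ord_recr /= descents_trow //.
  have [-> | n0] := posnP n; first by rewrite big_ord1 descents_trow.
  rewrite IH ?n0 //; last lia.
  rewrite /= (_ : n.+1 - 2 = n - 1) ?subSS ?subn0; last lia.
  have e : 2 ^ n = 2 ^ (n - 1) * 2 by rewrite -expnSr subn1 prednK.
  lia.
rewrite -(subnKC hc) big_split_ord /= prefix; last by rewrite h0 /=.
rewrite big1 ?addn0 // => k _.
by rewrite descents_trow_out // ltnS leq_addr.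
Qed.

(* Row r
   crosses every block in a different template row, and a block whose row ends with
   a 1 (template row k <= h) is followed by a 0 (row k+1 of T(0), or column 0). *)
Lemma row_descents h c r : 0 < h -> h.+1 < c -> r < c ->
  count (fun t => Bmat h c r t && ~~ Bmat h c r ((t + 1) %% ell h c)) (iota 0 (ell h c))
  = 2 ^ (h - 1) + 1.
Proof.
move=> h0 hc hr; rewrite /ell addn1 cyclic_descents //.
rewrite (@descents_blocks _ (fun p m => tmpl h ((r + 1 + p) %% c) m)).
- rewrite (sum_rot _ _ (fun k => descents (trow h k) (2 ^ h))).
  by rewrite sum_descents_trow //; lia.
- move=> p m hp hm; rewrite Bmat_block //.
  by have -> : p * 2 ^ h + m < c * 2 ^ h by nia.
- move=> p hp /tmpl_le k_le; have [lt_pc | ge_pc] := ltnP p.+1 c; last first.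
    by rewrite ltn_mul2r [p.+1 < c]ltnNge ge_pc andbF.
  rewrite -[p.+1 * 2 ^ h]addn0 Bmat_block ?expn_gt0 // tmpl_first ?andbF //.
  rewrite (_ : r + 1 + p.+1 = (r + 1 + p) + 1); last lia.
  by rewrite -modnDml modn_small; lia.
Qed.

Local Open Scope ring_scope.

Theorem mainTheorem6 (h c : nat) (hh : (1 <= h)%N) (hc : (2 * (h + 1) < c)%N) :
  (* (1) the 2*ell columns and their complements are pairwise distinct *)
  (forall (j1 j2 : nat) (b1 b2 : bool), (j1 < ell h c)%N -> (j2 < ell h c)%N ->
      colv h c j1 b1 = colv h c j2 b2 -> j1 = j2 /\ b1 = b2)
  (* (2) the first column is zero *)
  /\ (forall r : nat, (r < c)%N -> Bmat h c r 0 = false)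
  (* (3) each row of sigma(B) - B has exactly 2^(h-1)+1 entries equal to -1 *)
  /\ (forall r : nat, (r < c)%N ->
      count (fun t : nat =>
               ((Bmat h c r ((t + 1) %% ell h c))%:R - (Bmat h c r t)%:R : int) == -1)
            (iota 0 (ell h c))
      = (2 ^ (h - 1) + 1)%N).
Proof.
split; [|split].
- move=> j1 j2 b1 b2 hj1 hj2 /ffunP eq_cols.
  have {eq_cols} eq_rows r : (r < c)%N -> Bmat h c r j1 (+) b1 = Bmat h c r j2 (+) b2.
    by move=> hr; have := eq_cols (Ordinal hr); rewrite !ffunE.
  case: (eqVneq b1 b2) eq_rows => [<- | b12] eq_rows.
    split=> //; apply: (cols_eq _ hj1 hj2); first lia.
    by move=> r hr; apply: (@addIb b1); apply: eq_rows.
  exfalso; apply: (cols_not_compl hc hj1 hj2) => r hr.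
  move: (eq_rows r hr) b12; clear eq_rows.
  by case: b1; case: b2; case: (Bmat h c r j1); case: (Bmat h c r j2).
- by [].
- (* An entry -1 of sigma(B) - B is exactly a descent 1 -> 0 of the row. *)
  move=> r hr; rewrite -(row_descents hh _ hr); last lia.
  by apply: eq_count => t; case: (Bmat h c r t); case: (Bmat h c r _).
Qed.
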